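(* Let $f:\mathbb{R}^d\to\mathbb{R}$ be convex and $L$-smooth (i.e., $\|\nabla f(x)-\nabla f(y)\|\le L\|x-y\|$ for all $x,y$), and let $x^\star$ be a minimizer of $f$. Fix an integer $N\ge 1$ and define positive scalars $\theta_N=1$ and, for $k=N-1,\dots,0$, $\theta_k>0$ by $\theta_k^2-\theta_k=\theta_{k+1}^2$; additionally set $\theta_{N+1}=0$. Given $x_0\in\mathbb{R}^d$, let $v_0=\mathbf{0}$ and for $k=0,\dots,N-1$, $$v_{k+1}=v_k+\frac{1}{L\theta_k\theta_{k+1}^2}\nabla f(x_k),\qquad x_{k+1}=x_k-\frac{1}{L}\nabla f(x_k)-(2\theta_{k+1}^3-\theta_{k+1}^2)v_{k+1}.$$ Define, for $k=0,\dots,N$, $A_k=\frac{1}{\theta_k^2}\big(f(x_N)-f(x^\star)-\frac{1}{2L}\|\nabla f(x_N)\|^2\big)$, $B_k=\frac{1}{\theta_k^2}(f(x_k)-f(x^\star))$, $C_k=\frac{1}{2L\theta_k^2}\|\nabla f(x_k)\|^2$, and $E_k=\frac{\theta_{k+1}^2}{\theta_k}\langle\nabla f(x_k),v_k\rangle$. Then for every $k\in\{0,\dots,N-1\}$, $$A_k+B_{k+1}+C_{k+1}+E_{k+1}\le A_{k+1}+B_k+C_k+E_k-\theta_{k+1}\langle\nabla f(x_{k+1}),v_{k+1}\rangle+\sum_{i=k+1}^{N}\frac{\theta_i}{L\theta_k\theta_{k+1}^2}\langle\nabla f(x_k),\nabla f(x_i)\rangle.$$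
   Context: The iteration above is the paper's ''momentum'' reformulation of the optimized gradient method for gradient minimization (OGM-G). $\langle\cdot,\cdot\rangle$ and $\|\cdot\|$ are the Euclidean inner product and norm. *)

From HB Require Import structures.
From mathcomp Require Import all_boot all_order all_algebra.
From mathcomp Require Import all_classical all_reals topology normedtype derive.
Set Implicit Arguments. Unset Strict Implicit. Unset Printing Implicit Defensive.
Import Order.TTheory GRing.Theory Num.Theory.
Import numFieldNormedType.Exports.
Local Open Scope ring_scope.

(* Euclidean inner product and norm on R^d (the canonical norm on 'rV is the sup norm,
   so the Euclidean one is defined explicitly). *)
Definition dotp {R : realType} {d : nat} (u v : 'rV[R]_d) : R := (u *m v^T) 0 0.
Definition enorm {R : realType} {d : nat} (u : 'rV[R]_d) : R := Num.sqrt (dotp u u).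

Definition is_gradient {R : realType} {d : nat} (f : 'rV[R]_d -> R) (g : 'rV[R]_d -> 'rV[R]_d) :=
  forall x, differentiable f x /\ forall v, 'd f x v = dotp (g x) v.

Definition convex_fun {R : realType} {d : nat} (f : 'rV[R]_d -> R) :=
  forall (x y : 'rV[R]_d) (t : R), 0 <= t <= 1 ->
    f ((1 - t) *: x + t *: y) <= (1 - t) * f x + t * f y.

Definition L_smooth {R : realType} {d : nat} (L : R) (g : 'rV[R]_d -> 'rV[R]_d) :=
  forall x y, enorm (g x - g y) <= L * enorm (x - y).

(* The inequality is a nonnegative combination of two instances of the
   cocoercivity inequality of a convex L-smooth function,
     f y + <g y, x - y> + |g x - g y|^2 / (2 L) <= f x,
   for the pairs (x_k, x_{k+1}) and (x_N, x_k), with weights 1 / theta_{k+1}^2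
   and 1 / (theta_k theta_{k+1}^2).  Telescoping the iteration gives
     x_k - theta_{k+1}^4 v_k - x_N = (1/L) sum_{k <= i < N} theta_i g x_i,
   and with it and theta_k^2 - theta_k = theta_{k+1}^2 the combination becomes
   an exact identity.  The value f x* cancels.  Cocoercivity itself is the convex lower
   bound at y and the descent upper bound at x, both evaluated at the point
   x - (g x - g y) / L. *)

From HB Require Import structures.
From mathcomp Require Import all_boot all_order all_algebra.
From mathcomp Require Import all_classical all_reals topology normedtype derive.
From mathcomp Require Import ring lra.
Import Order.TTheory GRing.Theory Num.Theory.
Import numFieldNormedType.Exports.
Local Open Scope ring_scope.

Section EuclideanInnerProduct.
Context {R : realType} {d : nat}.
Implicit Types u v w : 'rV[R]_d.

Lemma dotpC u v : dotp u v = dotp v u.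
Proof. by rewrite /dotp -[u *m v^T]trmxK trmx_mul trmxK mxE. Qed.

Lemma dotpDr u v w : dotp u (v + w) = dotp u v + dotp u w.
Proof. by rewrite /dotp linearD mulmxDr mxE. Qed.

Lemma dotpDl u v w : dotp (v + w) u = dotp v u + dotp w u.
Proof. by rewrite dotpC dotpDr !(dotpC u). Qed.

Lemma dotpZr a u v : dotp u (a *: v) = a * dotp u v.
Proof. by rewrite /dotp linearZ /= -scalemxAr mxE. Qed.

Lemma dotpZl a u v : dotp (a *: v) u = a * dotp v u.
Proof. by rewrite dotpC dotpZr dotpC. Qed.

Lemma dotpNr u v : dotp u (- v) = - dotp u v.
Proof. by rewrite -scaleN1r dotpZr mulN1r. Qed.

Lemma dotpNl u v : dotp (- v) u = - dotp v u.
Proof. by rewrite dotpC dotpNr dotpC. Qed.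

Lemma dotpBr u v w : dotp u (v - w) = dotp u v - dotp u w.
Proof. by rewrite dotpDr dotpNr. Qed.

Lemma dotpBl u v w : dotp (v - w) u = dotp v u - dotp w u.
Proof. by rewrite dotpDl dotpNl. Qed.

Lemma dotp0r u : dotp u 0 = 0.
Proof. by rewrite /dotp linear0 mulmx0 mxE. Qed.

Lemma dotp_sumr (I : Type) (r : seq I) (P : pred I) (F : I -> 'rV[R]_d) u :
  dotp u (\sum_(i <- r | P i) F i) = \sum_(i <- r | P i) dotp u (F i).
Proof.
elim/big_rec2: _ => [|i y1 y2 _ <-]; first exact: dotp0r.
by rewrite dotpDr.
Qed.

Lemma dotpp_ge0 u : 0 <= dotp u u.
Proof. by rewrite /dotp mxE; apply: sumr_ge0 => i _; rewrite !mxE -expr2 sqr_ge0. Qed.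

Lemma sqr_enorm u : enorm u ^+ 2 = dotp u u.
Proof. by rewrite /enorm sqr_sqrtr // dotpp_ge0. Qed.

Lemma enorm_ge0 u : 0 <= enorm u.
Proof. exact: sqrtr_ge0. Qed.

Lemma dotp_le_of_dotpp_le a w (c : R) : 0 < c ->
  dotp a a <= c ^+ 2 * dotp w w -> dotp a w <= c * dotp w w.
Proof.
move=> c_gt0 aa_le.
have := dotpp_ge0 (a - c *: w).
rewrite !(dotpBl, dotpBr, dotpZl, dotpZr) (dotpC w a) => sq_ge0.
have : 2 * c * dotp a w <= 2 * c * (c * dotp w w) by nra.
by rewrite ler_pM2l ?mulr_gt0.
Qed.

End EuclideanInnerProduct.

Section SmoothConvex.
Context {R : realType} {d : nat}.
Variables (f : 'rV[R]_d -> R) (g : 'rV[R]_d -> 'rV[R]_d).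
Hypothesis f_grad : is_gradient f g.

Lemma is_derive_along_line p w t :
  is_derive t (1 : R) (fun s => f (p + s *: w)) (dotp (g (p + t *: w)) w).
Proof.
set q := p + t *: w; have [f_diff df] := f_grad q.
have quotient_eq : (fun e : R => e^-1 *: (f (p + (e *: 1 + t) *: w) - f q))
                 = (fun e : R => e^-1 *: (f (e *: w + q) - f q)).
  by apply/funext => e; rewrite [e *: 1]mulr1 scalerDl addrCA.
split; first by rewrite /derivable /= /shift quotient_eq; exact: diff_derivable.
by rewrite /derive /= /shift quotient_eq -/(derive f q w) deriveE // df.
Qed.

Variable L : R.
Hypothesis L_gt0 : 0 < L.
Hypothesis g_lip : L_smooth L g.

Lemma dotp_gradient_increment_le p w s : 0 < s ->
  dotp (g (p + s *: w) - g p) w <= L * s * dotp w w.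
Proof.
move=> s_gt0; apply: dotp_le_of_dotpp_le; first exact: mulr_gt0.
have := g_lip (p + s *: w) p; rewrite addrAC subrr add0r => lip.
have : enorm (g (p + s *: w) - g p) ^+ 2 <= (L * enorm (s *: w)) ^+ 2.
  by rewrite !expr2; apply: ler_pM; rewrite ?enorm_ge0.
by rewrite exprMn !sqr_enorm dotpZl dotpZr exprMn !expr2 !mulrA.
Qed.

Lemma smooth_upper_bound p w :
  f (p + w) <= f p + dotp (g p) w + L / 2 * dotp w w.
Proof.
set a := dotp (g p) w; set b := L / 2 * dotp w w.
pose h s := f (p + s *: w) - a * s - b * (s * s).
have h_der s : is_derive s (1 : R) h (dotp (g (p + s *: w)) w - a - 2 * s * b).
  have := is_deriveB (is_deriveB (is_derive_along_line p w s)
    (is_deriveZ a (is_derive_id s 1)))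
    (is_deriveZ b (is_deriveM (is_derive_id s 1) (is_derive_id s 1))).
  by move/is_derive_eq; apply; rewrite /GRing.scale /=; ring.
have : h 1 <= h 0.
  apply: (@ler0_derive1_le_cc _ h 0 1); rewrite ?bound_itvE ?ler01 //.
  - move=> s; rewrite in_itv /= => /andP[s_gt0 _].
    rewrite derive1E; have [_ ->] := h_der s.
    move: (dotp_gradient_increment_le p w s s_gt0); rewrite dotpBl -/a /b; lra.
  - by apply: derivable_within_continuous => s _; case: (h_der s).
rewrite /h !scale1r scale0r addr0; lra.
Qed.

Hypothesis f_convex : convex_fun f.

Lemma convex_gradient_lower_bound p w : f p + dotp (g p) w <= f (p + w).
Proof.
have [df_ex df] := is_derive_along_line p w 0; rewrite scale0r addr0 in df.
rewrite -df -lerBrDl; apply: (cvgr_to_le (cvg_dnbhs_at_right df_ex)).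
near=> e.
have e_gt0 : 0 < e by near: e; exact: nbhs_right_gt.
have e_le1 : e <= 1 by near: e; exact: nbhs_right_le.
rewrite /= /shift /= [e *: 1]mulr1 addr0 scale0r addr0.
have := f_convex p (p + w) e; rewrite e_le1 ltW //= => /(_ isT).
rewrite scalerBl scale1r scalerDr addrA subrK => chord.
rewrite [_ *: _]mulrC ler_pdivrMr //; lra.
Unshelve. all: by end_near.
Qed.

Definition cocoercivity_gap (x y : 'rV[R]_d) : R :=
  f x - (f y + dotp (g y) (x - y) + (2 * L)^-1 * dotp (g x - g y) (g x - g y)).

Lemma cocoercivity_gap_ge0 x y : 0 <= cocoercivity_gap x y.
Proof.
rewrite subr_ge0; set u := g x - g y.
have lower := convex_gradient_lower_bound y (x - L^-1 *: u - y).
have upper := smooth_upper_bound x (- (L^-1 *: u)).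
rewrite [y + _]addrC subrK in lower.
have u_def : dotp (g x) u - dotp (g y) u = dotp u u by rewrite -dotpBl.
move: lower upper u_def; clearbody u.
rewrite !(dotpBr, dotpNr, dotpZr, dotpNl, dotpZl).
set a := dotp (g y) u; set b := dotp (g x) u; set c := dotp u u.
have L_neq0 : L != 0 by rewrite gt_eqF.
have quad : L / 2 * - (L^-1 * - (L^-1 * c)) = (2 * L)^-1 * c by field.
rewrite quad => lower upper u_def.
have lin : L^-1 * b - L^-1 * a = 2 * ((2 * L)^-1 * c) by rewrite -u_def; field.
lra.
Qed.

End SmoothConvex.

Section OptimizedGradientMethodForGradients.
Context {R : realType} {d : nat}.
Variables (f : 'rV[R]_d -> R) (g : 'rV[R]_d -> 'rV[R]_d) (L : R) (N : nat)
  (theta : nat -> R) (x v : nat -> 'rV[R]_d).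
Hypothesis L_neq0 : L != 0.
Hypothesis theta_N : theta N = 1.
Hypothesis theta_succ : forall k, (k < N)%N ->
  0 < theta k /\ theta k ^+ 2 - theta k = theta k.+1 ^+ 2.
Hypothesis theta_N1 : theta N.+1 = 0.
Hypothesis v_succ : forall k, (k < N)%N ->
  v k.+1 = v k + (L * theta k * theta k.+1 ^+ 2)^-1 *: g (x k).
Hypothesis x_succ : forall k, (k < N)%N ->
  x k.+1 = x k - L^-1 *: g (x k) - (2 * theta k.+1 ^+ 3 - theta k.+1 ^+ 2) *: v k.+1.

Lemma theta_neq0 {k} : (k <= N)%N -> theta k != 0.
Proof.
rewrite leq_eqVlt => /orP[/eqP-> | /(theta_succ _)[theta_gt0 _]].
  by rewrite theta_N oner_eq0.
by rewrite gt_eqF.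
Qed.

Lemma theta_rec {k} : (k <= N)%N -> theta k ^+ 2 - theta k = theta k.+1 ^+ 2.
Proof.
rewrite leq_eqVlt => /orP[/eqP-> | /(theta_succ _)[] //].
by rewrite theta_N theta_N1 expr1n subrr expr0n.
Qed.

Lemma x_sub_succ {k} : (k < N)%N ->
  x k - x k.+1 = L^-1 *: g (x k) + (2 * theta k.+1 ^+ 3 - theta k.+1 ^+ 2) *: v k.+1.
Proof. by move=> kN; rewrite (x_succ _ kN) !opprB addrC addrA subrK addrC. Qed.

Lemma shifted_iterate_step {k} : (k < N)%N ->
  x k - theta k.+1 ^+ 4 *: v k
  = x k.+1 - theta k.+2 ^+ 4 *: v k.+1 + (L^-1 * theta k) *: g (x k).
Proof.
move=> kN; have [theta_gt0 sqrB] := theta_succ _ kN.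
have sqrB_succ := theta_rec kN.
have succ_neq0 := theta_neq0 kN.
have coef_v : 2 * theta k.+1 ^+ 3 - theta k.+1 ^+ 2 + theta k.+2 ^+ 4 = theta k.+1 ^+ 4.
  by rewrite (exprM _ 2 2) -sqrB_succ; ring.
have coef_g : L^-1 + theta k.+1 ^+ 4 * (L * theta k * theta k.+1 ^+ 2)^-1
              = L^-1 * theta k.
  have -> : theta k.+1 ^+ 4 * (L * theta k * theta k.+1 ^+ 2)^-1
            = theta k.+1 ^+ 2 / (L * theta k).
    by field; rewrite succ_neq0 L_neq0 gt_eqF.
  by rewrite -sqrB; field; rewrite L_neq0 gt_eqF.
rewrite (x_succ _ kN) (v_succ _ kN); apply/rowP => i; rewrite !mxE.
rewrite -coef_g -coef_v; ring.
Qed.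

Lemma weighted_gradient_sum {j} : (j <= N)%N ->
  \sum_(j <= i < N) theta i *: g (x i) = L *: (x j - theta j.+1 ^+ 4 *: v j - x N).
Proof.
move=> jN.
have x_N : x N = x N - theta N.+1 ^+ 4 *: v N by rewrite theta_N1 expr0n scale0r subr0.
rewrite [in RHS]x_N -[LHS]scale1r -(mulfV L_neq0) -scalerA scaler_sumr.
congr (_ *: _).
rewrite (@telescope_sumr_eq _ _ _ (fun i => - (x i - theta i.+1 ^+ 4 *: v i))) //.
  by rewrite opprK addrC.
by move=> i /andP[_ iN]; rewrite (shifted_iterate_step iN) opprK addKr scalerA.
Qed.

Lemma cocoercivity_gap_combination {k} (fstar : R) : (k < N)%N ->
  (theta k.+1 ^+ 2)^-1 * cocoercivity_gap f g L (x k) (x k.+1)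
  + (theta k * theta k.+1 ^+ 2)^-1 * cocoercivity_gap f g L (x N) (x k)
  = ((theta k.+1 ^+ 2)^-1 * (f (x N) - fstar - (2 * L)^-1 * enorm (g (x N)) ^+ 2)
     + (theta k ^+ 2)^-1 * (f (x k) - fstar)
     + (2 * L * theta k ^+ 2)^-1 * enorm (g (x k)) ^+ 2
     + theta k.+1 ^+ 2 / theta k * dotp (g (x k)) (v k)
     - theta k.+1 * dotp (g (x k.+1)) (v k.+1)
     + \sum_(k.+1 <= i < N.+1)
         theta i / (L * theta k * theta k.+1 ^+ 2) * dotp (g (x k)) (g (x i)))
    - ((theta k ^+ 2)^-1 * (f (x N) - fstar - (2 * L)^-1 * enorm (g (x N)) ^+ 2)
       + (theta k.+1 ^+ 2)^-1 * (f (x k.+1) - fstar)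
       + (2 * L * theta k.+1 ^+ 2)^-1 * enorm (g (x k.+1)) ^+ 2
       + theta k.+2 ^+ 2 / theta k.+1 * dotp (g (x k.+1)) (v k.+1)).
Proof.
move=> kN; have [theta_gt0 sqrB] := theta_succ _ kN.
have succ_neq0 := theta_neq0 kN.
have theta_k_neq0 : theta k != 0 by rewrite gt_eqF.
have sqrB_neq0 : theta k ^+ 2 - theta k != 0 by rewrite sqrB sqrf_eq0.
have inv_sqr : (theta k ^+ 2)^-1 = (theta k.+1 ^+ 2)^-1 - (theta k * theta k.+1 ^+ 2)^-1.
  by rewrite -sqrB; field; apply/andP.
have sum_dotp : \sum_(k.+1 <= i < N.+1)
      theta i / (L * theta k * theta k.+1 ^+ 2) * dotp (g (x k)) (g (x i))
    = (L * theta k * theta k.+1 ^+ 2)^-1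
      * dotp (g (x k)) (\sum_(k.+1 <= i < N.+1) theta i *: g (x i)).
  by rewrite dotp_sumr mulr_sumr; apply: eq_bigr => i _; rewrite dotpZr; ring.
have sum_split : \sum_(k.+1 <= i < N.+1) theta i *: g (x i)
    = L *: (x k - theta k.+1 ^+ 4 *: v k - x N) - theta k *: g (x k) + g (x N).
  by rewrite -(weighted_gradient_sum (ltnW kN)) (big_ltn kN) big_nat_recr //=
       theta_N scale1r [theta k *: _ + _]addrC addrK.
rewrite sum_dotp sum_split /cocoercivity_gap (x_sub_succ kN) -[x N - x k]opprB.
rewrite (v_succ _ kN) [(2 * L * theta k ^+ 2)^-1]invfM inv_sqr -(theta_rec kN) !sqr_enorm.
rewrite !(dotpDl, dotpDr, dotpBl, dotpBr, dotpNl, dotpNr, dotpZl, dotpZr).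
rewrite (dotpC (g (x k.+1)) (g (x k))) (dotpC (g (x N)) (g (x k))).
by field; rewrite succ_neq0 L_neq0 theta_k_neq0.
Qed.

End OptimizedGradientMethodForGradients.

Theorem proposition1 (R : realType) (d : nat) (f : 'rV[R]_d -> R)
  (g : 'rV[R]_d -> 'rV[R]_d) (L : R) (xstar : 'rV[R]_d) (N : nat)
  (theta : nat -> R) (x v : nat -> 'rV[R]_d) :
  0 < L ->
  is_gradient f g ->
  convex_fun f ->
  L_smooth L g ->
  (forall y, f xstar <= f y) ->
  (1 <= N)%N ->
  theta N = 1 ->
  (forall k, (k < N)%N -> 0 < theta k /\ theta k ^+ 2 - theta k = theta k.+1 ^+ 2) ->
  theta N.+1 = 0 ->
  v 0%N = 0 ->
  (forall k, (k < N)%N ->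
     v k.+1 = v k + (L * theta k * theta k.+1 ^+ 2)^-1 *: g (x k)) ->
  (forall k, (k < N)%N ->
     x k.+1 = x k - L^-1 *: g (x k)
                  - (2 * theta k.+1 ^+ 3 - theta k.+1 ^+ 2) *: v k.+1) ->
  let A k := (theta k ^+ 2)^-1 *
               (f (x N) - f xstar - (2 * L)^-1 * enorm (g (x N)) ^+ 2) in
  let B k := (theta k ^+ 2)^-1 * (f (x k) - f xstar) in
  let C k := (2 * L * theta k ^+ 2)^-1 * enorm (g (x k)) ^+ 2 in
  let E k := theta k.+1 ^+ 2 / theta k * dotp (g (x k)) (v k) in
  forall k, (k < N)%N ->
    A k + B k.+1 + C k.+1 + E k.+1 <=
    A k.+1 + B k + C k + E k - theta k.+1 * dotp (g (x k.+1)) (v k.+1)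
    + \sum_(k.+1 <= i < N.+1)
        theta i / (L * theta k * theta k.+1 ^+ 2) * dotp (g (x k)) (g (x i)).
Proof.
move=> L_gt0 f_grad f_convex g_lip _ _ theta_N theta_succ theta_N1 _ v_succ x_succ
  A B C E k kN.
have [theta_gt0 _] := theta_succ k kN.
have gap_ge0 y z : 0 <= cocoercivity_gap f g L y z by exact: cocoercivity_gap_ge0.
rewrite -subr_ge0 -(@cocoercivity_gap_combination _ _ f g L N theta x v
  (lt0r_neq0 L_gt0) theta_N theta_succ theta_N1 v_succ x_succ k (f xstar) kN).
apply: addr_ge0; apply: mulr_ge0; rewrite ?gap_ge0 // invr_ge0.
  by rewrite sqr_ge0.
by rewrite mulr_ge0 ?sqr_ge0 ?ltW.
Qed.
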